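(* Let $\chi:\mathbb{R}_+\to\mathbb{R}$ be a Lipschitz function. The function $X:\mathcal Q_2(\mathbb{R}_+)\to\mathbb{R}$, $X(\mathsf q)=\int_0^1\chi(\mathsf q(u))\,\mathrm du$, is $\mathcal Q_2(\mathbb{R}_+)^*$-nondecreasing if and only if $\chi$ is nondecreasing and convex.
   Context: $\mathcal Q_2(\mathbb{R}_+)$ is the set of nondecreasing, right-continuous (with left limits) functions $\mathsf q:[0,1)\to\mathbb{R}_+$ that belong to $L^2([0,1),\mathbb{R})$. Its dual cone is $\mathcal Q_2(\mathbb{R}_+)^*=\{\mathsf p\in L^2([0,1),\mathbb{R}):\langle\mathsf p,\mathsf q\rangle_{L^2}\ge0$ for all $\mathsf q\in\mathcal Q_2(\mathbb{R}_+)\}$. A function $\mathsf g:\mathcal Q_2(\mathbb{R}_+)\to\mathbb{R}$ is $\mathcal Q_2(\mathbb{R}_+)^*$-nondecreasing if $\mathsf g(\mathsf q)\le\mathsf g(\mathsf q')$ whenever $\mathsf q,\mathsf q'\in\mathcal Q_2(\mathbb{R}_+)$ and $\mathsf q'-\mathsf q\in\mathcal Q_2(\mathbb{R}_+)^*$. *)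

From HB Require Import structures.
From mathcomp Require Import all_boot all_order all_algebra.
From mathcomp Require Import all_classical all_reals all_analysis.
Set Implicit Arguments. Unset Strict Implicit. Unset Printing Implicit Defensive.
Import Order.TTheory GRing.Theory Num.Theory.
Import numFieldNormedType.Exports.
Local Open Scope classical_set_scope.
Local Open Scope ring_scope.

Section Q2.
Variable R : realType.

Local Notation mu := (@lebesgue_measure R).

Definition I01 : set R := `[0%R, 1%R[%classic.

(* f : [0,1) -> R belongs to L^2([0,1)) (functions are represented on R,
   only their values on [0,1) matter) *)
Definition inL2 (f : R -> R) : Prop :=
  measurable_fun I01 f /\
  (\int[mu]_(x in I01) ((f x) ^+ 2)%:E < +oo)%E.

Definition L2inner (p q : R -> R) : R :=
  \int[mu]_(u in I01) (p u * q u).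

Definition inQ2 (q : R -> R) : Prop :=
  [/\ (forall u v, u \in I01 -> v \in I01 -> u <= v -> q u <= q v),
      (forall u, u \in I01 -> q x @[x --> u^'+] --> q u),
      (forall u, 0 < u < 1 -> cvg (q x @[x --> u^'-])),
      (forall u, u \in I01 -> 0 <= q u)
    & inL2 q].

Definition inQ2dual (p : R -> R) : Prop :=
  inL2 p /\ forall q, inQ2 q -> 0 <= L2inner p q.

Definition Q2dual_nondecreasing (g : (R -> R) -> R) : Prop :=
  forall q q', inQ2 q -> inQ2 q' -> inQ2dual (q' \- q) -> g q <= g q'.

Definition Xfun (chi : R -> R) (q : R -> R) : R :=
  \int[mu]_(u in I01) chi (q u).

(* properties of chi : R_+ -> R (represented on R, only values on [0,oo) matter) *)
Definition lipschitz_Rplus (chi : R -> R) : Prop :=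
  exists L : R, forall x y, 0 <= x -> 0 <= y -> `|chi x - chi y| <= L * `|x - y|.

Definition nondecreasing_Rplus (chi : R -> R) : Prop :=
  forall x y, 0 <= x -> x <= y -> chi x <= chi y.

Definition convex_Rplus (chi : R -> R) : Prop :=
  forall x y t, 0 <= x -> 0 <= y -> 0 <= t <= 1 ->
    chi (t * x + (1 - t) * y) <= t * chi x + (1 - t) * chi y.

End Q2.

(* If chi is convex and nondecreasing, its right derivative D is nonnegative,
   nondecreasing, right-continuous and bounded by the Lipschitz constant, so
   D o q belongs to Q_2(R_+) whenever q does.  Integrating the subgradient
   inequality chi q' - chi q >= D(q) (q' - q) gives
   X(q') - X(q) >= <q' - q, D o q> >= 0 for q' - q in the dual cone.
   Conversely, let q be the constant z and q' equal to x on [0,t) and to y on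
   [t,1), with x <= z <= y and z <= t x + (1 - t) y.  Then q' - q changes sign
   once, from - to +, and has nonnegative mean, which puts it in the dual cone
   (pair it with g in Q_2(R_+) and compare g with g(t)); hence
   chi z <= t chi x + (1 - t) chi y.  Taking t = 0 gives monotonicity and
   z = t x + (1 - t) y gives convexity. *)

From mathcomp Require Import all_boot all_order all_algebra.
From mathcomp Require Import all_classical all_reals all_analysis.
From mathcomp Require Import ring lra measurable_realfun.
Import Order.TTheory GRing.Theory Num.Theory.
Import numFieldNormedType.Exports.
Local Open Scope classical_set_scope.
Local Open Scope ring_scope.
Set Implicit Arguments. Unset Strict Implicit. Unset Printing Implicit Defensive.

Section UnitInterval.
Variable R : realType.
Local Notation mu := (@lebesgue_measure R).
Local Notation I := (@I01 R).

Lemma measurable_I01 : measurable I.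
Proof. exact: measurable_itv. Qed.

Lemma lebesgue_measure_I01 : mu I = 1%E.
Proof. by rewrite /I01 lebesgue_measure_itv/= lte_fin ltr01 oppr0 adde0. Qed.

Lemma I01P u : I u <-> 0 <= u < 1.
Proof. by rewrite /I01/= in_itv. Qed.

Lemma bounded_integrable_I01 (f : R -> R) M : measurable_fun I f ->
  (forall x, I x -> `|f x| <= M) -> mu.-integrable I (EFin \o f).
Proof.
move=> mf fM; apply: (@measurable_bounded_integrable _ _ _ mu f I measurable_I01) => //.
- by change (mu I < +oo)%E; rewrite lebesgue_measure_I01 ltry.
- exists M; split; first exact: num_real.
  by move=> y My x Ix; exact: le_trans (fM x Ix) (ltW My).
Qed.

Lemma integrableM_bounded_I01 (f g : R -> R) M : mu.-integrable I (EFin \o f) ->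
  measurable_fun I g -> (forall x, I x -> `|g x| <= M) ->
  mu.-integrable I (EFin \o (fun x => f x * g x)).
Proof.
move=> fi mg gM.
have : mu.-integrable I (fun x => ((f x)%:E * (g x)%:E)%E).
  apply: integrableMl => //; first exact: measurable_I01.
  exists M; split; first exact: num_real.
  by move=> y My x Ix; exact: le_trans (gM x Ix) (ltW My).
by apply: eq_integrable; [exact: measurable_I01 | move=> x _ /=; rewrite EFinM].
Qed.

Lemma integrableZl_I01 (k : R) (f : R -> R) : mu.-integrable I (EFin \o f) ->
  mu.-integrable I (EFin \o (fun x => k * f x)).
Proof.
move=> fi; have : mu.-integrable I (fun x => (k%:E * (f x)%:E)%E).
  by apply: integrableZl => //; exact: measurable_I01.
by apply: eq_integrable; [exact: measurable_I01 | move=> x _ /=; rewrite EFinM].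
Qed.

Lemma bounded_inL2 (f : R -> R) M : measurable_fun I f ->
  (forall x, I x -> `|f x| <= M) -> inL2 f.
Proof.
move=> mf fM; split => //.
have /integrableP[_] := integrableM_bounded_I01 (bounded_integrable_I01 mf fM) mf fM.
apply: le_lt_trans; rewrite le_eqVlt; apply/orP; left; apply/eqP.
by apply: eq_integral => x _ /=; rewrite ger0_norm// -expr2 sqr_ge0.
Qed.

(* |f| <= 1 + f^2, and [0,1) has finite measure. *)
Lemma inL2_integrable (f : R -> R) : inL2 f -> mu.-integrable I (EFin \o f).
Proof.
case=> mf fi.
have i1 : mu.-integrable I (EFin \o (cst 1 : R -> R)).
  by apply: (bounded_integrable_I01 (M := 1)) => [|x _]; rewrite ?normr1.
have i2 : mu.-integrable I (EFin \o (fun x => f x ^+ 2)).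
  apply/integrableP; split; first exact/measurable_EFinP/measurable_funX.
  apply: le_lt_trans fi; rewrite le_eqVlt; apply/orP; left; apply/eqP.
  by apply: eq_integral => x _ /=; rewrite ger0_norm// sqr_ge0.
have : mu.-integrable I ((EFin \o (cst 1 : R -> R)) \+ (EFin \o (fun x => f x ^+ 2))).
  by apply: integrableD => //; exact: measurable_I01.
apply: le_integrable; [exact: measurable_I01 | exact/measurable_EFinP |].
move=> x Ix /=; rewrite lee_fin.
rewrite -(real_normK (num_real (f x))) (ger0_norm (x := 1 + _)); last by rewrite addr_ge0 ?sqr_ge0.
have := normr_ge0 (f x); set a := `|f x|; nra.
Qed.

Lemma nondecreasing_I01_cvg_left (f : R -> R) :
  (forall u v, I u -> I v -> u <= v -> f u <= f v) ->
  forall u, 0 < u < 1 -> cvg (f x @[x --> u^'-]).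
Proof.
move=> nd u /andP[u0 u1].
have I_near : \forall x \near u^'-, forall y, x <= y -> y <= u -> I y.
  near=> x; have x0 : 0 < x by near: x; exact: nbhs_left_gt.
  move=> y xy yu; apply/I01P.
  by rewrite (le_lt_trans yu u1) (le_trans (ltW x0) xy).
apply: nondecreasing_at_left_is_cvgr.
- near=> x; have Ix : forall y, x <= y -> y <= u -> I y by near: x.
  move=> y z /andP[xy yu] /andP[xz zu]; apply: nd; apply: Ix; exact: ltW.
- near=> x; have Ix : forall y, x <= y -> y <= u -> I y by near: x.
  exists (f u) => _ [y /andP[xy yu] <-].
  by apply: nd (ltW yu); [apply: Ix; rewrite ltW | apply/I01P; rewrite ltW].
Unshelve. all: by end_near. Qed.

End UnitInterval.

Section RightDerivative.
Variables (R : realType) (chi : R -> R) (L : R).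
Hypothesis chi_lip : forall x y, 0 <= x -> 0 <= y -> `|chi x - chi y| <= L * `|x - y|.
Hypothesis chi_nd : nondecreasing_Rplus chi.
Hypothesis chi_cvx : convex_Rplus chi.

Definition diff_quot (a h : R) := (chi (a + h) - chi a) / h.

Definition diff_quots (a : R) := [set diff_quot a h | h in [set h : R | 0 < h]].

Definition rderiv (a : R) := inf (diff_quots a).

Lemma lip_const_ge0 : 0 <= L.
Proof.
have := chi_lip ler01 (lexx 0).
by rewrite subr0 normr1 mulr1; apply: le_trans; exact: normr_ge0.
Qed.

Lemma chord_slope_le b a c : 0 <= b -> b < a -> a < c ->
  (chi a - chi b) * (c - a) <= (chi c - chi a) * (a - b).
Proof.
move=> b0 ba ac; have cb : 0 < c - b by rewrite subr_gt0 (lt_trans ba ac).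
pose t := (c - a) / (c - b).
have t01 : 0 <= t <= 1.
  apply/andP; split; first by apply: divr_ge0 (ltW cb); rewrite subr_ge0 ltW.
  by rewrite ler_pdivrMr // mul1r lerD2l lerN2 ltW.
have := chi_cvx b0 (le_trans b0 (ltW (lt_trans ba ac))) t01.
have -> : t * b + (1 - t) * c = a by rewrite /t; field; rewrite gt_eqF.
have ta : t * (c - b) = c - a by rewrite /t divfK ?gt_eqF.
have t'a : (1 - t) * (c - b) = a - b by rewrite mulrBl mul1r ta; ring.
move=> chi_a; suff : chi a * (c - b) <= chi b * (c - a) + chi c * (a - b) by nra.
rewrite -ta -t'a (_ : chi b * _ + _ = (t * chi b + (1 - t) * chi c) * (c - b)); last by ring.
by rewrite ler_pM2r.
Qed.

Lemma diff_quot_ge0 a h : 0 <= a -> 0 < h -> 0 <= diff_quot a h.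
Proof.
move=> a0 h0; apply: divr_ge0 (ltW h0).
by rewrite subr_ge0 chi_nd // lerDl ltW.
Qed.

Lemma diff_quot_le_lip a h : 0 <= a -> 0 < h -> diff_quot a h <= L.
Proof.
move=> a0 h0; rewrite /diff_quot ler_pdivrMr // (le_trans (ler_norm _)) //.
have := chi_lip (addr_ge0 a0 (ltW h0)) a0.
by rewrite [a + h - a]addrC addKr (gtr0_norm h0) mulrC.
Qed.

Lemma diff_quots_neq0 a : diff_quots a !=set0.
Proof. by exists (diff_quot a 1), 1 => //=; exact: ltr01. Qed.

Lemma diff_quots_lbound a : 0 <= a -> lbound (diff_quots a) 0.
Proof. by move=> a0 _ [h h0 <-]; exact: diff_quot_ge0. Qed.

Lemma rderiv_ge0 a : 0 <= a -> 0 <= rderiv a.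
Proof.
by move=> a0; apply: lb_le_inf; [exact: diff_quots_neq0 | exact: diff_quots_lbound].
Qed.

Lemma rderiv_le_diff_quot a h : 0 <= a -> 0 < h -> rderiv a <= diff_quot a h.
Proof.
move=> a0 h0; apply: ge_inf; first by exists 0; exact: diff_quots_lbound.
by exists h.
Qed.

Lemma rderiv_le_lip a : 0 <= a -> rderiv a <= L.
Proof.
by move=> a0; apply: le_trans (rderiv_le_diff_quot a0 ltr01) (diff_quot_le_lip a0 ltr01).
Qed.

Lemma chord_slope_le_rderiv b a : 0 <= b -> b < a ->
  (chi a - chi b) / (a - b) <= rderiv a.
Proof.
move=> b0 ba; apply: lb_le_inf; first exact: diff_quots_neq0.
move=> _ [h h0 <-]; rewrite /diff_quot.
have ab : 0 < a - b by rewrite subr_gt0.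
rewrite ler_pdivrMr // mulrAC ler_pdivlMr //.
have := chord_slope_le b0 ba (_ : a < a + h).
by rewrite [a + h - a]addrC addKr; apply; rewrite ltrDl.
Qed.

Lemma rderiv_subgradient a b : 0 <= a -> 0 <= b -> rderiv a * (b - a) <= chi b - chi a.
Proof.
move=> a0 b0; case: (ltgtP b a) => [ba|ab|->]; last by rewrite !subrr mulr0.
- have ab0 : 0 < a - b by rewrite subr_gt0.
  by have := chord_slope_le_rderiv b0 ba; rewrite ler_pdivrMr //; nra.
- have ba0 : 0 < b - a by rewrite subr_gt0.
  have := rderiv_le_diff_quot a0 ba0.
  by rewrite /diff_quot [a + (b - a)]addrC subrK ler_pdivlMr.
Qed.

Lemma rderiv_nd a a' : 0 <= a -> a <= a' -> rderiv a <= rderiv a'.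
Proof.
move=> a0; rewrite le_eqVlt => /predU1P[->//|aa'].
have d0 : 0 < a' - a by rewrite subr_gt0.
apply: le_trans (rderiv_le_diff_quot a0 d0) _.
by rewrite /diff_quot [a + (a' - a)]addrC subrK; exact: chord_slope_le_rderiv.
Qed.

(* A difference quotient within e/2 of rderiv a moves by at most
   2L(a'-a)/h when a is replaced by a' >= a. *)
Lemma rderiv_right_cont a e : 0 <= a -> 0 < e ->
  exists2 d, 0 < d & forall a', a <= a' -> a' - a < d -> rderiv a' <= rderiv a + e.
Proof.
move=> a0 e0.
have e2 : rderiv a < rderiv a + e / 2 by rewrite ltrDl divr_gt0.
have [_ [h /= h0 <-] qh] := inf_lt (diff_quots_neq0 a) e2.
have L1 : 0 < L + 1 by rewrite ltr_wpDl ?lip_const_ge0.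
exists (e * h / (4 * (L + 1))); first by rewrite divr_gt0 ?mulr_gt0.
move=> a' aa' a'd; have a'0 : 0 <= a' := le_trans a0 aa'.
apply: le_trans (rderiv_le_diff_quot a'0 h0) _.
have da : `|a' - a| = a' - a by rewrite ger0_norm // subr_ge0.
have chih : chi (a' + h) - chi (a + h) <= L * (a' - a).
  have := chi_lip (addr_ge0 a'0 (ltW h0)) (addr_ge0 a0 (ltW h0)).
  by rewrite opprD addrACA subrr addr0 da; exact: le_trans (ler_norm _).
have chi0 : chi a - chi a' <= L * (a' - a).
  by have := chi_lip a0 a'0; rewrite (distrC a) da; exact: le_trans (ler_norm _).
have LL1 : L * (a' - a) <= (L + 1) * (a' - a) by rewrite ler_wpM2r ?subr_ge0 ?lerDl.
have small : (a' - a) * (4 * (L + 1)) < e * h by rewrite -ltr_pdivlMr ?mulr_gt0.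
have close : chi (a + h) - chi a < (rderiv a + e / 2) * h by rewrite -ltr_pdivrMr.
rewrite /diff_quot ler_pdivrMr //; nra.
Qed.

End RightDerivative.

Section Sufficiency.
Variables (R : realType) (chi : R -> R) (L : R).
Hypothesis chi_lip : forall x y, 0 <= x -> 0 <= y -> `|chi x - chi y| <= L * `|x - y|.
Hypothesis chi_nd : nondecreasing_Rplus chi.
Hypothesis chi_cvx : convex_Rplus chi.
Local Notation mu := (@lebesgue_measure R).
Local Notation I := (@I01 R).
Local Notation D := (rderiv chi).

(* Extending the right derivative by its value at 0 makes it nondecreasing
   on all of R, hence Borel measurable. *)
Definition rderiv_ext (x : R) := D (Num.max x 0).

Lemma max0_ge0 (x : R) : 0 <= Num.max x 0.
Proof. by rewrite le_max lexx orbT. Qed.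

Lemma rderiv_ext_nd : {homo rderiv_ext : x y / x <= y}.
Proof. by move=> x y xy; apply: rderiv_nd => //; rewrite ?max0_ge0 ?le_max2. Qed.

Lemma rderiv_ext_bound x : `|rderiv_ext x| <= L.
Proof.
rewrite ger0_norm; last exact/rderiv_ge0/max0_ge0.
exact/rderiv_le_lip/max0_ge0.
Qed.

Lemma rderiv_ext_comp_right_cont q u : inQ2 q -> u \in I ->
  rderiv_ext (q x) @[x --> u^'+] --> rderiv_ext (q u).
Proof.
case=> q_nd q_rc _ q_ge0 _ uI; apply/cvgrPdist_le => e e0.
have qu0 := q_ge0 u uI.
have [d d0 Dd] := rderiv_right_cont chi_lip chi_nd qu0 e0.
have /cvgrPdist_lt /(_ d d0) q_near := q_rc u uI.
have /set_mem /I01P /andP[u0 u1] := uI.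
near=> x.
have ux : u < x by near: x; exact: nbhs_right_gt.
have x1 : x < 1 by near: x; exact: nbhs_right_lt.
have xI : x \in I by apply/mem_set/I01P; rewrite (le_trans u0 (ltW ux)) x1.
have qux : q u <= q x by apply: q_nd => //; exact: ltW.
rewrite /rderiv_ext (max_l qu0) (max_l (le_trans qu0 qux)).
rewrite ler0_norm ?subr_le0 ?rderiv_nd // opprB lerBlDl; apply: Dd => //.
have : `|q u - q x| < d by near: x.
by rewrite distrC ger0_norm // subr_ge0.
Unshelve. all: by end_near. Qed.

Lemma rderiv_ext_comp_inQ2 q : inQ2 q -> inQ2 (rderiv_ext \o q).
Proof.
move=> qQ; have [q_nd _ _ _ [q_meas _]] := qQ.
have Dq_nd u v : u \in I -> v \in I -> u <= v -> rderiv_ext (q u) <= rderiv_ext (q v).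
  by move=> uI vI uv; apply: rderiv_ext_nd; exact: q_nd.
split => //.
- by move=> u; exact: rderiv_ext_comp_right_cont.
- by apply: nondecreasing_I01_cvg_left => u v uI vI; apply: Dq_nd; exact/mem_set.
- by move=> u _; exact/rderiv_ge0/max0_ge0.
- apply: (bounded_inL2 (M := L)) => [|x _]; last exact: rderiv_ext_bound.
  exact: measurableT_comp (nondecreasing_measurable _ rderiv_ext_nd) q_meas.
Qed.

Lemma chi_comp_integrable q : inQ2 q -> mu.-integrable I (EFin \o (chi \o q)).
Proof.
case=> _ _ _ q_ge0 qL2; have [q_meas _] := qL2.
have chi_meas : measurable_fun [set: R] (fun x => chi (Num.max x 0)).
  apply: nondecreasing_measurable => // x y xy.
  by apply: chi_nd; rewrite ?max0_ge0 ?le_max2.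
have dom : mu.-integrable I ((EFin \o cst `|chi 0|) \+ (EFin \o (fun u => q u * L))).
  apply: integrableD; first exact: measurable_I01.
    by apply: (bounded_integrable_I01 (M := `|chi 0|)) => //= x _; rewrite normr_id.
  by apply: (integrableM_bounded_I01 (M := `|L|)); first exact: inL2_integrable.
apply: le_integrable dom; first exact: measurable_I01.
  apply/measurable_EFinP; apply: eq_measurable_fun (measurableT_comp chi_meas q_meas).
  by move=> x xI /=; rewrite max_l //; exact: q_ge0.
move=> x xI /=; have qx0 : 0 <= q x by apply: q_ge0; exact/mem_set.
rewrite lee_fin [X in _ <= X]ger0_norm ?addr_ge0 ?mulr_ge0 ?(lip_const_ge0 chi_lip) //.
apply: le_trans (_ : `|chi 0| + `|chi (q x) - chi 0| <= _).
  by rewrite -[X in `|X|](subrK (chi 0)) addrC; apply: ler_normD.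
by have := chi_lip qx0 (lexx 0); rewrite subr0 (ger0_norm qx0) lerD2l mulrC.
Qed.

Lemma Xfun_Q2dual_nondecreasing : Q2dual_nondecreasing (Xfun chi).
Proof.
move=> q q' qQ q'Q [pL2 p_dual].
have DqQ := rderiv_ext_comp_inQ2 qQ.
have [_ _ _ _ [Dq_meas _]] := DqQ.
have chiq_int := chi_comp_integrable qQ; have chiq'_int := chi_comp_integrable q'Q.
rewrite /Xfun -subr_ge0 -RintegralB //; last exact: measurable_I01.
apply: le_trans (p_dual _ DqQ) _; apply: le_Rintegral; first exact: measurable_I01.
- apply: (integrableM_bounded_I01 (M := L)) => //; first exact: inL2_integrable.
  by move=> x _; exact: rderiv_ext_bound.
- have : mu.-integrable I (fun x => (chi (q' x))%:E - (chi (q x))%:E)%E.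
    by apply: integrableB => //; exact: measurable_I01.
  by apply: eq_integrable; [exact: measurable_I01 | move=> x _ /=; rewrite EFinB].
- move=> x /mem_set xI /=; have [_ _ _ q_ge0 _] := qQ; have [_ _ _ q'_ge0 _] := q'Q.
  rewrite /rderiv_ext (max_l (q_ge0 _ xI)) mulrC.
  exact: rderiv_subgradient (q_ge0 _ xI) (q'_ge0 _ xI).
Qed.

End Sufficiency.

Section Necessity.
Variable R : realType.
Local Notation mu := (@lebesgue_measure R).
Local Notation I := (@I01 R).

Definition step (a b t u : R) : R := if t <= u then b else a.

Lemma comp_step (f : R -> R) a b t u : f (step a b t u) = step (f a) (f b) t u.
Proof. by rewrite /step; case: ifP. Qed.

Lemma step_nd a b t : a <= b -> {homo step a b t : u v / u <= v}.
Proof.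
move=> ab u v uv; rewrite /step; case: ifP => [tu|_]; last by case: ifP.
by rewrite (le_trans tu uv).
Qed.

Lemma step_bound a b t u : `|step a b t u| <= `|a| + `|b|.
Proof. by rewrite /step; case: ifP => _; rewrite ?lerDr ?lerDl. Qed.

Lemma measurable_step a b t : a <= b -> measurable_fun I (step a b t).
Proof.
by move=> ab; apply: nondecreasing_measurable; [exact: measurable_I01 | exact: step_nd].
Qed.

Lemma inL2_step a b t : a <= b -> inL2 (step a b t).
Proof.
move=> ab; apply: (bounded_inL2 (M := `|a| + `|b|)) (measurable_step t ab) _.
by move=> x _; exact: step_bound.
Qed.

Lemma Rintegral_indic_ge t : 0 <= t < 1 ->
  \int[mu]_(u in I) \1_(`[t, +oo[%classic) u = 1 - t.
Proof.
case/andP=> t0 t1; rewrite /Rintegral integral_indic;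
  [|exact: measurable_I01 | exact: measurable_itv].
rewrite (_ : _ `&` _ = `[t, 1[%classic); last first.
  apply/seteqP; split => u /=; rewrite /I01 /= !in_itv /= ?andbT.
    by move=> [tu /andP[_ ->]]; rewrite tu.
  by move=> /andP[tu ->]; rewrite tu (le_trans t0 tu).
by change (fine (mu `[t, 1[%classic) = 1 - t); rewrite lebesgue_measure_itv /= lte_fin t1.
Qed.

Lemma Rintegral_step a b t : 0 <= t < 1 ->
  \int[mu]_(u in I) step a b t u = a * t + b * (1 - t).
Proof.
move=> t01.
have stepE u : step a b t u = a + (b - a) * \1_(`[t, +oo[%classic) u.
  rewrite /step indicE (_ : u \in _ = (t <= u)); last first.
    by apply/idP/idP; rewrite in_setE /= in_itv /= andbT.
  by case: ifP => _; rewrite ?mulr1 ?mulr0 ?addr0 // addrC subrK.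
have indic_int : mu.-integrable I (EFin \o \1_(`[t, +oo[%classic)).
  apply: (bounded_integrable_I01 (M := 1)); first exact: measurable_indic (measurable_itv _).
  by move=> u _; rewrite indicE; case: (_ \in _); rewrite ?normr1 ?normr0.
have cst_int : mu.-integrable I (EFin \o cst a).
  by apply: (bounded_integrable_I01 (M := `|a|)) => //; exact: measurable_cst.
have := integrableZl_I01 (b - a) indic_int => scaled_int.
under eq_Rintegral do rewrite stepE.
rewrite RintegralD //; last exact: measurable_I01.
rewrite Rintegral_cst; last exact: measurable_I01.
rewrite RintegralZl //; last exact: measurable_I01.
rewrite Rintegral_indic_ge // (_ : fine (mu I) = 1); last by rewrite lebesgue_measure_I01.
ring.
Qed.

Lemma Xfun_step (chi : R -> R) a b t : 0 <= t < 1 ->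
  Xfun chi (step a b t) = chi a * t + chi b * (1 - t).
Proof.
by move=> t01; rewrite /Xfun; under eq_Rintegral do rewrite comp_step; rewrite Rintegral_step.
Qed.

Lemma step_inQ2 a b t : 0 <= a -> a <= b -> inQ2 (step a b t).
Proof.
move=> a0 ab; split.
- by move=> u v _ _; exact: step_nd.
- move=> u _; apply: cvg_near_cst; rewrite /step; case: (leP t u) => [tu|ut].
    by near=> w; rewrite (le_trans tu) //; apply/ltW; near: w; exact: nbhs_right_gt.
  near=> w; rewrite ifF //; apply/negbTE; rewrite -ltNge.
  by near: w; exact: nbhs_right_lt.
- by move=> u u01; apply: nondecreasing_I01_cvg_left => // v w _ _; exact: step_nd.
- by move=> u _; rewrite /step; case: ifP => _ //; exact: le_trans ab.
- exact: inL2_step.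
Unshelve. all: by end_near. Qed.

(* For nondecreasing g, step u * (g u - g t) >= 0 pointwise since the step
   changes sign at t; hence <step, g> >= g t * mean >= 0. *)
Lemma step_inQ2dual a b t : 0 <= t < 1 -> a <= 0 <= b ->
  0 <= a * t + b * (1 - t) -> inQ2dual (step a b t).
Proof.
move=> t01 /andP[a0 b0] mean_ge0.
have ab := le_trans a0 b0.
split=> [|g [g_nd _ _ g_ge0 gL2]]; first exact: inL2_step.
have tI : t \in I by apply/mem_set/I01P.
pose c := g t; have c0 : 0 <= c := g_ge0 _ tI.
have step_meas := measurable_step t ab.
have step_int : mu.-integrable I (EFin \o step a b t).
  exact: bounded_integrable_I01 step_meas (fun u _ => step_bound a b t u).
have stepg_int : mu.-integrable I (EFin \o (fun u => step a b t u * g u)).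
  have := integrableM_bounded_I01 (inL2_integrable gL2) step_meas (fun u _ => step_bound a b t u).
  by apply: eq_integrable; [exact: measurable_I01 | move=> u _ /=; rewrite mulrC].
have cstep_int : mu.-integrable I (EFin \o (fun u => c * step a b t u)).
  exact: integrableZl_I01.
have : 0 <= \int[mu]_(u in I) (step a b t u * g u - c * step a b t u).
  apply: Rintegral_ge0 => u uI; have uI' : u \in I := mem_set uI.
  have /I01P/andP[u0 _] := uI.
  rewrite /step; case: (leP t u) => tu.
    by have : c <= g u := g_nd _ _ tI uI' tu; nra.
  by have : g u <= c := g_nd _ _ uI' tI (ltW tu); nra.
rewrite RintegralB //; last exact: measurable_I01.
rewrite RintegralZl //; last exact: measurable_I01.
rewrite Rintegral_step // subr_ge0 => /(le_trans _); apply.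
exact: mulr_ge0.
Qed.

Lemma Q2dual_nondecreasing_below_chord (chi : R -> R) x y z t :
  Q2dual_nondecreasing (Xfun chi) -> 0 <= x <= z -> z <= y -> 0 <= t < 1 ->
  z <= x * t + y * (1 - t) -> chi z <= chi x * t + chi y * (1 - t).
Proof.
move=> X_nd /andP[x0 xz] zy t01 z_le_mean.
have xy := le_trans xz zy.
have diffE : step x y t \- step z z 0 = step (x - z) (y - z) t.
  by apply/funext => u; rewrite /step /=; case: ifP; case: ifP.
have := X_nd _ _ (step_inQ2 0 (le_trans x0 xz) (lexx z)) (step_inQ2 t x0 xy).
rewrite !Xfun_step ?lexx ?ltr01 // mulr0 add0r subr0 mulr1; apply.
rewrite diffE; apply: step_inQ2dual => //.
  by rewrite subr_le0 xz subr_ge0.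
nra.
Qed.

Lemma convex_Rplus_ordered (chi : R -> R) :
  (forall x y t, 0 <= x <= y -> 0 <= t < 1 ->
     chi (t * x + (1 - t) * y) <= t * chi x + (1 - t) * chi y) ->
  convex_Rplus chi.
Proof.
move=> cvx x y t x0 y0 /andP[t0 t1].
wlog xy : x y t x0 y0 t0 t1 / x <= y.
  move=> ordered; case: (leP x y) => [|yx]; first exact: ordered.
  rewrite [t * x + _]addrC [t * chi x + _]addrC.
  have := ordered y x (1 - t) y0 x0; have -> : 1 - (1 - t) = t by ring.
  by apply; rewrite ?subr_ge0 ?lerBlDr ?lerDl // ltW.
case: (ltP t 1) => [tl1|tg1]; first by apply: cvx; rewrite ?x0 ?xy ?t0.
have -> : t = 1 by apply/eqP; rewrite eq_le t1.
by rewrite subrr !mul0r !addr0 !mul1r.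
Qed.

End Necessity.

Theorem proposition4p4 (R : realType) (chi : R -> R) :
  lipschitz_Rplus chi ->
  (Q2dual_nondecreasing (Xfun chi) <-> nondecreasing_Rplus chi /\ convex_Rplus chi).
Proof.
move=> [L chi_lip]; split=> [X_nd|[chi_nd chi_cvx]]; last first.
  exact: Xfun_Q2dual_nondecreasing chi_lip chi_nd chi_cvx.
split.
- move=> a b a0 ab.
  have := Q2dual_nondecreasing_below_chord (x := a) (y := b) (z := a) (t := 0) X_nd.
  by rewrite !mulr0 !add0r !subr0 !mulr1; apply; rewrite ?a0 ?lexx ?ltr01.
- apply: convex_Rplus_ordered => x y t /andP[x0 xy] t01; have /andP[t0 t1] := t01.
  rewrite [t * chi x]mulrC [(1 - t) * chi y]mulrC.
  apply: Q2dual_nondecreasing_below_chord => //.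
  + by rewrite x0 /=; nra.
  + nra.
  + by rewrite [x * t]mulrC [y * _]mulrC.
Qed.
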